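(* For every real $M\ge1$, $$\mathrm{supp}(F_M)\subseteq\{x\in\mathbb{R}^2:|qx-r|\le|q|^{-\tau}\text{ for some }(q,r)\in\mathbb{Z}^2(M)\times\mathbb{Z}^2\}.$$ Moreover, for any sequence $(M_k)_{k\ge1}$ of real numbers $M_k\ge1$ with $M_k\le M_{k+1}/2$ for all $k\in\mathbb{N}$, $$\bigcap_{k=1}^\infty\mathrm{supp}(F_{M_k})\subseteq E_\ast(\tau).$$
   Context: Identify $\mathbb{R}^2$ with $\mathbb{C}$ (products $qx$ are complex multiplication, $\mathbb{Z}^2$ is the Gaussian integers); $|x|=\max(|x_1|,|x_2|)$. Let $\tau\in\mathbb{R}$, $\tau\neq-1$, $a=2/(1+\tau)$, and fix a positive integer $K>2+a$. Fix a non-negative $C^K$ function $\phi$ on $\mathbb{R}^2$ with $\int\phi=1$ and $\mathrm{supp}(\phi)\subseteq[-1,1]^2$. For $\varepsilon>0$ let $\phi^\varepsilon(x)=\varepsilon^{-2}\phi(x/\varepsilon)$, $\Phi^\varepsilon(x)=\sum_{r\in\mathbb{Z}^2}\phi^\varepsilon(x-r)$, $\Phi^\varepsilon_q(x)=\Phi^\varepsilon(qx)$. For $M>0$ let $\mathbb{Z}^2(M)=\{q\in\mathbb{Z}^2:M/2<|q|\le M\}$, $\varepsilon(M)=\tfrac12M^{-\tau}$, and $F_M=\frac{1}{|\mathbb{Z}^2(M)|}\sum_{q\in\mathbb{Z}^2(M)}\Phi^{\varepsilon(M)}_q$. Define $$E_\ast(\tau)=\{x\in\mathbb{R}^2:|qx-r|\le|q|^{-\tau}\text{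 for infinitely many }(q,r)\in\mathbb{Z}^2\times\mathbb{Z}^2,\ q\neq0\}.$$ *)

From HB Require Import structures.
From mathcomp Require Import all_boot all_order all_algebra.
From mathcomp Require Import all_classical all_reals all_analysis.
Set Implicit Arguments. Unset Strict Implicit. Unset Printing Implicit Defensive.
Import Order.TTheory GRing.Theory Num.Theory.
Import numFieldNormedType.Exports.
Local Open Scope classical_set_scope.
Local Open Scope ring_scope.

Section Defs.
Variable R : realType.

(* R^2 identified with C: points are pairs (x1, x2) = x1 + i x2 *)
Definition pt := (R * R)%type.
Definition gauss := (int * int)%type.

Definition gR (q : gauss) : pt := (q.1%:~R, q.2%:~R).

(* complex multiplication q x *)
Definition cmul (q : gauss) (x : pt) : pt :=
  (q.1%:~R * x.1 - q.2%:~R * x.2, q.1%:~R * x.2 + q.2%:~R * x.1).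

Definition nrm (x : pt) : R := Num.max `|x.1| `|x.2|.
Definition gnrm (q : gauss) : R := nrm (gR q).

Definition psub (x y : pt) : pt := (x.1 - y.1, x.2 - y.2).

Definition suppR (f : pt -> R) : set pt := closure [set x | f x <> 0].
Definition suppE (f : pt -> \bar R) : set pt := closure [set x | f x <> 0%E].

Definition edir (b : bool) : pt := if b then (1, 0) else (0, 1).
Fixpoint ipartial (s : seq bool) (f : pt -> R) : pt -> R :=
  match s with
  | [::] => f
  | b :: s' => 'D_(edir b) (ipartial s' f)
  end.

Definition CK (K : nat) (f : pt -> R) : Prop :=
  forall s : seq bool, (size s <= K)%N ->
    continuous (ipartial s f) /\
    ((size s < K)%N -> forall (b : bool) (x : pt), derivable (ipartial s f) x (edir b)).

Definition phieps (phi : pt -> R) (eps : R) (x : pt) : R :=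
  eps ^-2 * phi (x.1 / eps, x.2 / eps).

Definition Phieps (phi : pt -> R) (eps : R) (x : pt) : \bar R :=
  (\esum_(r in [set: gauss]) (phieps phi eps (psub x (gR r)))%:E)%E.

(* Z^2(M) = {q : M/2 < |q| <= M}, enumerated inside the box |q_i| <= floor M *)
Definition boxZ (M : R) : seq int :=
  [seq (i%:Z - (Num.truncn M)%:Z)%R | i <- iota 0 ((Num.truncn M).*2.+1)].
Definition Z2 (M : R) : seq gauss :=
  [seq q <- [seq (a, b) | a <- boxZ M, b <- boxZ M] | (M / 2 < gnrm q) && (gnrm q <= M)].
Definition Z2set (M : R) : set gauss := [set q | M / 2 < gnrm q /\ gnrm q <= M].

Definition epsM (tau M : R) : R := 2^-1 * M `^ (- tau).

Definition FM (phi : pt -> R) (tau M : R) (x : pt) : \bar R :=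
  (((size (Z2 M))%:R^-1)%:E * \sum_(q <- Z2 M) Phieps phi (epsM tau M) (cmul q x))%E.

Definition approxM (tau M : R) : set pt :=
  [set x | exists (q r : gauss), Z2set M q /\
             nrm (psub (cmul q x) (gR r)) <= gnrm q `^ (- tau)].

Definition Estar (tau : R) : set pt :=
  [set x | ~ finite_set [set qr : gauss * gauss | qr.1 != 0 /\
             nrm (psub (cmul qr.1 x) (gR qr.2)) <= gnrm qr.1 `^ (- tau)]].

End Defs.

(* A point y with F_M(y) <> 0 has some q in Z^2(M) with q y within eps(M) of a
   Gaussian integer, since phi is supported in the unit square.  Moving from y to
   a nearby x changes q x by at most 2|q| |x - y|, so every x in the support of
   F_M satisfies |qx - r| <= 2 eps(M) = M^-tau <= |q|^-tau when tau > 0; when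
   tau <= 0 the bound |q|^-tau >= 1 is met by any q with |q| >= 1.  For the
   second claim, the annuli Z^2(M_k) are pairwise disjoint because M_k <= M_l / 2
   for k < l, so the pairs (q_k, r_k) chosen for each k are all distinct. *)
From HB Require Import structures.
From mathcomp Require Import all_boot all_order all_algebra.
From mathcomp Require Import all_classical all_reals all_analysis.
From mathcomp Require Import ring lra.
Import Order.TTheory GRing.Theory Num.Theory.
Import numFieldNormedType.Exports.
Local Open Scope classical_set_scope.
Local Open Scope ring_scope.

Section Approximation.
Context {R : realType}.
Implicit Types (tau M eps : R) (x y v : pt R) (q r : gauss) (phi : pt R -> R).

Lemma nrm_le v c : `|v.1| <= c -> `|v.2| <= c -> nrm v <= c.
Proof. by move=> h1 h2; rewrite /nrm ge_max h1 h2. Qed.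

Lemma nrm_ge v : `|v.1| <= nrm v /\ `|v.2| <= nrm v.
Proof. by rewrite /nrm !le_max !lexx orbT. Qed.

Lemma gnrm_ge q : `|(q.1%:~R : R)| <= gnrm R q /\ `|(q.2%:~R : R)| <= gnrm R q.
Proof. exact: (nrm_ge (gR R q)). Qed.

Lemma nrm_cmul_sub_le q x y (z : pt R) :
  nrm (psub (cmul q x) z) <=
  nrm (psub (cmul q y) z) + 2 * (gnrm R q * nrm (psub x y)).
Proof.
have [q1 q2] := gnrm_ge q; have [d1 d2] := nrm_ge (psub x y).
have [e1 e2] := nrm_ge (psub (cmul q y) z).
have mul_le (c d : R) : `|c| <= gnrm R q -> `|d| <= nrm (psub x y) ->
    `|c * d| <= gnrm R q * nrm (psub x y).
  by move=> hc hd; rewrite normrM ler_pM.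
have normD3 (a b c : R) : `|a + b + c| <= `|a| + `|b| + `|c|.
  by rewrite (le_trans (ler_normD _ _)) // lerD2r ler_normD.
move: d1 d2 e1 e2; rewrite /psub /cmul /= => d1 d2 e1 e2.
apply: nrm_le => /=.
- have -> : q.1%:~R * x.1 - q.2%:~R * x.2 - z.1 = (q.1%:~R * y.1 - q.2%:~R * y.2 - z.1)
      + q.1%:~R * (x.1 - y.1) + (- q.2%:~R) * (x.2 - y.2) by ring.
  have := mul_le _ _ q1 d1; have := mul_le (- q.2%:~R) _ _ d2.
  rewrite normrN => /(_ q2) h2 h1.
  by apply: le_trans (normD3 _ _ _) _; lra.
- have -> : q.1%:~R * x.2 + q.2%:~R * x.1 - z.2 = (q.1%:~R * y.2 + q.2%:~R * y.1 - z.2)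
      + q.1%:~R * (x.2 - y.2) + q.2%:~R * (x.1 - y.1) by ring.
  have := mul_le _ _ q1 d2; have := mul_le _ _ q2 d1 => h2 h1.
  by apply: le_trans (normD3 _ _ _) _; lra.
Qed.

Lemma phieps_neq0_nrm_le phi eps v : 0 < eps ->
  suppR phi `<=` [set x | `|x.1| <= 1 /\ `|x.2| <= 1] ->
  phieps phi eps v != 0 -> nrm v <= eps.
Proof.
move=> eps0 hsupp; rewrite mulf_eq0 negb_or => /andP[_ /eqP phiv].
have [] := hsupp _ (subset_closure phiv).
rewrite /= !normrM !normfV (gtr0_norm eps0) !ler_pdivrMr // !mul1r.
exact: nrm_le.
Qed.

Lemma FM_neq0 phi tau M y : FM phi tau M y <> 0%E ->
  exists q r, q \in Z2 M /\ phieps phi (epsM tau M) (psub (cmul q y) (gR R r)) != 0.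
Proof.
move=> hF; apply: contrapT => hnone; apply: hF.
rewrite /FM big1_seq ?mule0 // => q /andP[_ qZ2].
rewrite /Phieps esum1 // => r _; congr (_%:E).
by apply: contrapT => /eqP nz; apply: hnone; exists q, r.
Qed.

Lemma Z2set_Z2 M q : q \in Z2 M -> Z2set M q.
Proof. by rewrite mem_filter => /andP[/andP[]]. Qed.

Lemma epsM_gt0 tau M : 0 < M -> 0 < epsM tau M.
Proof. by move=> M0; rewrite mulr_gt0 ?invr_gt0 ?powR_gt0. Qed.

Lemma supp_FM_near_Z2 phi tau M x : 0 < M ->
  suppR phi `<=` [set x | `|x.1| <= 1 /\ `|x.2| <= 1] ->
  suppE (FM phi tau M) x -> exists q r, Z2set M q /\
    nrm (psub (cmul q x) (gR R r)) <= 2 * epsM tau M.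
Proof.
move=> M0 hsupp hx; set eps := epsM tau M.
have eps0 : 0 < eps := epsM_gt0 tau M M0.
have d0 : 0 < eps / (2 * M) by rewrite divr_gt0 // mulr_gt0.
have [y [Fy [/= xy1 xy2]]] := hx _ (nbhsx_ballx x _ d0).
have [q [r [qZ2 phiy]]] := FM_neq0 phi tau M y Fy.
have /Z2set_Z2 [_ qM] := qZ2.
exists q, r; split; first exact: Z2set_Z2.
have xy : nrm (psub x y) <= eps / (2 * M).
  by apply: nrm_le; apply: ltW; [exact: xy1 | exact: xy2].
have qxy : gnrm R q * nrm (psub x y) <= eps / 2.
  have q0 : 0 <= gnrm R q := le_trans (normr_ge0 _) (gnrm_ge q).1.
  have xy0 : 0 <= nrm (psub x y) := le_trans (normr_ge0 _) (nrm_ge _).1.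
  apply: le_trans (ler_pM q0 xy0 qM xy) _.
  have -> : M * (eps / (2 * M)) = eps / 2 by field; rewrite gt_eqF.
  exact: lexx.
have := phieps_neq0_nrm_le phi eps _ eps0 hsupp phiy.
have := nrm_cmul_sub_le q x y (gR R r); lra.
Qed.

Lemma supp_FM_sub_approxM_pos phi tau M : 0 < tau -> 0 < M ->
  suppR phi `<=` [set x | `|x.1| <= 1 /\ `|x.2| <= 1] ->
  suppE (FM phi tau M) `<=` approxM tau M.
Proof.
move=> tau0 M0 hsupp x /(supp_FM_near_Z2 phi tau M x M0 hsupp) [q [r [[qlo qM] qx]]].
exists q, r; split => //; apply: le_trans qx _.
have -> : 2 * epsM tau M = M `^ (- tau) by rewrite /epsM mulrA divff // mul1r.
rewrite !powRN lef_pV2 ?posrE ?powR_gt0 //; last lra.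
by apply: ge0_ler_powR; rewrite ?nnegrE; lra.
Qed.

Lemma nrm_sub_floor_le v : nrm (psub v (gR R (Num.floor v.1, Num.floor v.2))) <= 1.
Proof.
have frac_le (t : R) : `|t - (Num.floor t)%:~R| <= 1.
  have /andP[lo hi] := floor_itv t; rewrite intrD rmorph1 in hi.
  by rewrite ger0_norm; lra.
by apply: nrm_le; rewrite /psub /gR /=; apply: frac_le.
Qed.

Lemma approxM_nonpos tau M x : tau <= 0 -> 1 <= M -> approxM tau M x.
Proof.
move=> tau0 M1; set f := Num.floor M.
have /andP[fM Mf] := floor_itv M; rewrite intrD rmorph1 in Mf.
have f1 : (1 : R) <= f%:~R by rewrite ler1z floor_ge_int.
pose q : gauss := (f, 0).
have gq : gnrm R q = f%:~R.
  by rewrite /gnrm /nrm /= normr0 ger0_norm ?(max_idPl _) //; lra.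
exists q, (Num.floor (cmul q x).1, Num.floor (cmul q x).2); split.
  by split; rewrite gq; lra.
apply: le_trans (nrm_sub_floor_le _) _; rewrite gq.
rewrite -{1}(powRr0 f%:~R); apply: (ler_powR f1); lra.
Qed.

Lemma supp_FM_sub_approxM phi tau M : 1 <= M ->
  suppR phi `<=` [set x | `|x.1| <= 1 /\ `|x.2| <= 1] ->
  suppE (FM phi tau M) `<=` approxM tau M.
Proof.
move=> M1 hsupp x; have [tau0|tau0] := leP tau 0.
  by move=> _; exact: approxM_nonpos.
by apply: supp_FM_sub_approxM_pos => //; lra.
Qed.

Lemma Z2set_neq0 M q : 0 <= M -> Z2set M q -> q != 0.
Proof.
move=> M0 [qlo _]; apply/eqP => q0; move: qlo.
by rewrite q0 /gnrm /nrm /gR /= normr0 maxxx; lra.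
Qed.

Lemma Z2set_disjoint M N q : M <= N / 2 -> Z2set M q -> ~ Z2set N q.
Proof. by move=> MN [_ qM] [qN _]; lra. Qed.

Lemma lacunary_le_half (u : nat -> R) : (forall k, 0 <= u k) ->
  (forall k, u k <= u k.+1 / 2) -> forall k l, (k < l)%N -> u k <= u l / 2.
Proof.
move=> u0 u_half k; elim=> // l IH; rewrite ltnS leq_eqVlt => /orP[/eqP -> //|kl].
by have := IH kl; have := u_half l; have := u0 l; lra.
Qed.

End Approximation.

Lemma infinite_set_of_disjoint_witnesses (T : Type) (A : set T) (P : nat -> T -> Prop) :
  (forall k, exists2 t, A t & P k t) -> (forall k l t, P k t -> P l t -> k = l) ->
  infinite_set A.
Proof.
move=> wit disj finA; pose f k := projT1 (cid2 (wit k)).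
have fA k : A (f k) by rewrite /f; case: cid2.
have fP k : P k (f k) by rewrite /f; case: cid2.
apply: infinite_nat.
have -> : [set: nat] = f @^-1` A by apply/seteqP; split=> // k _; exact: fA.
apply: finite_preimage finA => k l _ _ fkl.
by apply: (disj k l (f k)); rewrite // fkl.
Qed.

Theorem lemma4 (R : realType) (tau : R) (K : nat) (phi : pt R -> R)
  (htau : tau != -1)
  (hK0 : (0 < K)%N)
  (hK : 2 + 2 / (1 + tau) < K%:R)
  (hphi0 : forall x, 0 <= phi x)
  (hphiK : CK K phi)
  (hphiint : (\int[(@lebesgue_measure R \x @lebesgue_measure R)%E]_x (phi x)%:E = 1)%E)
  (hphisupp : suppR phi `<=` [set x | `|x.1| <= 1 /\ `|x.2| <= 1]) :
  (forall M : R, 1 <= M -> suppE (FM phi tau M) `<=` approxM tau M) /\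
  (forall Mk : nat -> R, (forall k, 1 <= Mk k) -> (forall k, Mk k <= Mk k.+1 / 2) ->
     \bigcap_k suppE (FM phi tau (Mk k)) `<=` Estar tau).
Proof.
split=> [M M1|Mk Mk1 Mk_half x xMk]; first exact: supp_FM_sub_approxM.
have Mk0 k : 0 <= Mk k by have := Mk1 k; lra.
apply: (@infinite_set_of_disjoint_witnesses _ _ (fun k qr => Z2set (Mk k) qr.1)).
- move=> k; have [q [r [qZ2 qx]]] :=
    supp_FM_sub_approxM phi tau (Mk k) (Mk1 k) hphisupp x (xMk k I).
  by exists (q, r) => //; split=> //; exact: Z2set_neq0 qZ2.
- move=> k l qr qk ql; case: (ltngtP k l) => // [kl|lk]; exfalso.
  + by move: qk ql; apply: Z2set_disjoint; exact: lacunary_le_half.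
  + by move: ql qk; apply: Z2set_disjoint; exact: lacunary_le_half.
Qed.
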